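(* Let $k\ge 2$ and let $K>0$, $\sigma>0$, $0<d_0<d_1$, $0<\beta\le \tfrac12$, and let $\theta$ be a positive even integer. Consider agents with positions $x_i(t)\in\mathbb{R}^n$ and velocities $v_i(t)\in\mathbb{R}^n$, $i=1,\dots,k$, evolving by $$\dot x_i=v_i,\qquad \dot v_i=\sum_{j=1}^k a_{ij}(x)(v_j-v_i)+\Lambda(v)\sum_{j\neq i} f_0(\|x_i-x_j\|^2)(x_i-x_j)+\Lambda(v)\sum_{j\ne i} f_1(\|x_i-x_j\|^2)(x_j-x_i),$$ where $$a_{ij}(x)=\frac{K}{(\sigma^2+\|x_i-x_j\|^2)^{\beta}},\quad \Lambda(v)=\Big(\frac1k\sum_{i>j}\|v_i-v_j\|^2\Big)^{1/2},\quad f_0(r)=\frac{1}{(r-d_0)^{\theta}},\quad f_1(r)=\frac{1}{(r-d_1)^{\theta}}.$$ Suppose the initial positions satisfy $d_0<\|x_i(0)-x_j(0)\|^2<d_1$ for all $i\neq j$, and let $(x(t),v(t))$ be a solution defined for all $t\ge 0$. Then the average velocity $\bar v(t)=\frac1k\sum_{i=1}^k v_i(t)$ is constant in $t$, the deviations $\|x_i(t)-\bar x(t)\|$ (with $\bar x=\frac1k\sum_i x_i$) remain bounded for $t\ge0$, $\int_0^\infty\big(\sum_{i=1}^k\|v_i(t)-\bar v\|^2\big)^{1/2}dt<\infty$, and $v_i(t)-\bar v\to 0$ as $t\to\infty$ for every $i$; i.e. all velocities converge to a common value.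
   Context: $\|\cdot\|$ is the Euclidean norm. The term $\sum_j a_{ij}(x)(v_j-v_i)$ is the alignment term, the $f_0$ term the separation term, and the $f_1$ term the cohesion term. Note $\Lambda(v)$ equals $\big(\sum_{i=1}^k\|v_i-\bar v\|^2\big)^{1/2}$. *)

From Stdlib Require Import Reals Lra Lia Arith.
Open Scope R_scope.

Fixpoint fsum (n : nat) (f : nat -> R) : R :=
  match n with
  | O => 0
  | S m => fsum m f + f m
  end.

(* Vectors in R^n are represented by functions nat -> R (coordinates 0..n-1).
   A configuration of k agents is a function nat -> nat -> R
   (agent index 0..k-1, coordinate 0..n-1). *)

Definition norm2 (n : nat) (u : nat -> R) : R := fsum n (fun c => u c ^ 2).

Definition dist2 (n : nat) (p : nat -> nat -> R) (i j : nat) : R :=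
  norm2 n (fun c => p i c - p j c).

Definition acoef (n : nat) (K sigma beta : R) (p : nat -> nat -> R) (i j : nat) : R :=
  K / Rpower (sigma ^ 2 + dist2 n p i j) beta.

Definition Lambda (k n : nat) (w : nat -> nat -> R) : R :=
  sqrt (/ INR k * fsum k (fun i => fsum i (fun j => dist2 n w i j))).

Definition fpot (d : R) (theta : nat) (r : R) : R := / (r - d) ^ theta.

Definition accel (k n : nat) (K sigma beta d0 d1 : R) (theta : nat)
    (p w : nat -> nat -> R) (i c : nat) : R :=
  fsum k (fun j => acoef n K sigma beta p i j * (w j c - w i c))
  + Lambda k n w * fsum k (fun j => if Nat.eqb j i then 0
        else fpot d0 theta (dist2 n p i j) * (p i c - p j c))
  + Lambda k n w * fsum k (fun j => if Nat.eqb j i then 0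
        else fpot d1 theta (dist2 n p i j) * (p j c - p i c)).

Definition avg (k : nat) (p : nat -> nat -> R) (c : nat) : R :=
  / INR k * fsum k (fun i => p i c).

(* (x, v) : R -> (agents -> coords -> R) is a (classical) solution on [0, +oo):
   - the right-hand side is defined along the trajectory
     (||x_i - x_j||^2 avoids the singular values d0, d1),
   - the ODE holds (two-sided derivatives) for every t > 0,
   - x and v are right-continuous at t = 0. *)
Definition is_solution (k n : nat) (K sigma beta d0 d1 : R) (theta : nat)
    (x v : R -> nat -> nat -> R) : Prop :=
  (forall t, 0 <= t -> forall i j, (i < k)%nat -> (j < k)%nat -> i <> j ->
       dist2 n (x t) i j <> d0 /\ dist2 n (x t) i j <> d1)
  /\ (forall t, 0 < t -> forall i c, (i < k)%nat -> (c < n)%nat ->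
       derivable_pt_lim (fun s => x s i c) t (v t i c)
       /\ derivable_pt_lim (fun s => v s i c) t
            (accel k n K sigma beta d0 d1 theta (x t) (v t) i c))
  /\ (forall i c, (i < k)%nat -> (c < n)%nat ->
       limit1_in (fun s => x s i c) (fun s => 0 <= s) (x 0 i c) 0
       /\ limit1_in (fun s => v s i c) (fun s => 0 <= s) (v 0 i c) 0).

From Stdlib Require Import Reals Lra Lia Morphisms Classical.
Open Scope R_scope.

(** Write [S = Lambda(v)^2] and [P = 1/4 sum_(i <> j) Phi(|x_i - x_j|^2)], where
    [Phi(r) = - 1/(m (r - d0)^m) - 1/(m (d1 - r)^m)] with [theta = m + 1] is a negative
    primitive of [f0 - f1] on [(d0, d1)] blowing up at both ends.  Along a solution
    [S' = - 2 A + 2 sqrt S P'], where the alignment dissipation satisfies [A >= kappa S]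
    with [kappa = k K / (sigma^2 + d1)^beta]; hence the energy [sqrt S - P] decreases at
    rate at least [kappa sqrt S].  As [P <= 0], the initial energy [E0] bounds [sqrt S] and
    [- P]; the bound on [- P] keeps all distances a fixed amount away from [d0] and [d1],
    so the forces stay bounded and [S] is Lipschitz.  Integrating the energy inequality
    bounds the integral of [sqrt S], and since the energy cannot keep dropping by a fixed
    amount, a Barbalat-type argument forces [S -> 0].  The average velocity is conserved
    because the pairwise forces are antisymmetric. *)

Lemma fsum_ext n f g : (forall i, (i < n)%nat -> f i = g i) -> fsum n f = fsum n g.
Proof.
  induction n as [|n IH]; intros H; simpl; [reflexivity|].
  rewrite IH, H; [reflexivity|lia|intros; apply H; lia].
Qed.

#[local] Instance fsum_proper n : Proper (pointwise_relation nat eq ==> eq) (fsum n).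
Proof. intros f g H; apply fsum_ext; intros; apply H. Qed.

Lemma fsum_add n f g : fsum n (fun i => f i + g i) = fsum n f + fsum n g.
Proof. induction n; simpl; [ring | rewrite IHn; ring]. Qed.

Lemma fsum_sub n f g : fsum n (fun i => f i - g i) = fsum n f - fsum n g.
Proof. induction n; simpl; [ring | rewrite IHn; ring]. Qed.

Lemma fsum_opp n f : fsum n (fun i => - f i) = - fsum n f.
Proof. induction n; simpl; [ring | rewrite IHn; ring]. Qed.

Lemma fsum_mul_l n a f : fsum n (fun i => a * f i) = a * fsum n f.
Proof. induction n; simpl; [ring | rewrite IHn; ring]. Qed.

Lemma fsum_mul_r n a f : fsum n (fun i => f i * a) = fsum n f * a.
Proof. induction n; simpl; [ring | rewrite IHn; ring]. Qed.

Lemma fsum_const n a : fsum n (fun _ => a) = INR n * a.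
Proof. induction n; simpl fsum; [simpl; ring | rewrite IHn, S_INR; ring]. Qed.

Lemma fsum_zero n : fsum n (fun _ => 0) = 0.
Proof. rewrite fsum_const; ring. Qed.

Lemma fsum_swap n m (f : nat -> nat -> R) :
  fsum n (fun i => fsum m (fun j => f i j)) = fsum m (fun j => fsum n (fun i => f i j)).
Proof. induction n; simpl; [now rewrite fsum_zero | now rewrite IHn, <- fsum_add]. Qed.

Lemma fsum_le n f g : (forall i, (i < n)%nat -> f i <= g i) -> fsum n f <= fsum n g.
Proof.
  induction n as [|n IH]; intros H; simpl; [lra|].
  apply Rplus_le_compat; [apply IH; intros; apply H|apply H]; lia.
Qed.

Lemma fsum_nonneg n f : (forall i, (i < n)%nat -> 0 <= f i) -> 0 <= fsum n f.
Proof. intros H; rewrite <- (fsum_zero n); apply fsum_le, H. Qed.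

Lemma fsum_nonpos n f : (forall i, (i < n)%nat -> f i <= 0) -> fsum n f <= 0.
Proof. intros H; rewrite <- (fsum_zero n); apply fsum_le, H. Qed.

Lemma fsum_term_le n f i :
  (forall j, (j < n)%nat -> 0 <= f j) -> (i < n)%nat -> f i <= fsum n f.
Proof.
  induction n as [|n IH]; intros H Hi; [lia|]; simpl.
  destruct (Nat.eq_dec i n) as [->|Hin].
  - assert (0 <= fsum n f) by (apply fsum_nonneg; intros; apply H; lia); lra.
  - assert (f i <= fsum n f) by (apply IH; [intros; apply H|]; lia).
    assert (0 <= f n) by (apply H; lia); lra.
Qed.

Lemma fsum_le_term n f i :
  (forall j, (j < n)%nat -> f j <= 0) -> (i < n)%nat -> fsum n f <= f i.
Proof.
  intros H Hi.
  assert (Hopp : - f i <= fsum n (fun j => - f j))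
    by (apply (fsum_term_le n (fun j => - f j)); auto; intros j Hj; specialize (H j Hj); lra).
  rewrite fsum_opp in Hopp; lra.
Qed.

Lemma Rabs_fsum_le n f : Rabs (fsum n f) <= fsum n (fun i => Rabs (f i)).
Proof.
  induction n; simpl; [rewrite Rabs_R0; lra|].
  eapply Rle_trans; [apply Rabs_triang | lra].
Qed.

Lemma fsum_symmetrize k (h : nat -> nat -> R) :
  fsum k (fun i => fsum k (fun j => h i j))
  = / 2 * fsum k (fun i => fsum k (fun j => h i j + h j i)).
Proof.
  setoid_rewrite fsum_add; rewrite fsum_add.
  rewrite <- (fsum_swap k k (fun i j => h i j)); change (fun i => fsum k (h i))
    with (fun i => fsum k (fun j => h i j)); lra.
Qed.

Lemma fsum_antisym_zero k (h : nat -> nat -> R) :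
  (forall i j, h i j + h j i = 0) -> fsum k (fun i => fsum k (fun j => h i j)) = 0.
Proof.
  intros Hh; rewrite fsum_symmetrize; setoid_rewrite Hh.
  setoid_rewrite fsum_zero; rewrite fsum_zero; ring.
Qed.

Lemma fsum_lower_triangle_sym k (h : nat -> nat -> R) :
  (forall i j, h i j = h j i) -> (forall i, h i i = 0) ->
  fsum k (fun i => fsum i (fun j => h i j)) = / 2 * fsum k (fun i => fsum k (fun j => h i j)).
Proof.
  intros Hs H0.
  assert (Hsplit : fsum k (fun i => fsum k (fun j => h i j))
            = fsum k (fun i => fsum i (fun j => h i j + h j i)) + fsum k (fun i => h i i)).
  { induction k as [|k IH]; simpl; [ring|].
    rewrite fsum_add, IH, fsum_add; change (fsum k (h k)) with (fsum k (fun j => h k j)); ring. }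
  rewrite Hsplit; setoid_rewrite H0; rewrite fsum_zero.
  rewrite (fsum_ext k (fun i => fsum i (fun j => h i j + h j i))
             (fun i => 2 * fsum i (fun j => h i j))).
  - rewrite fsum_mul_l; field.
  - intros i _; rewrite <- fsum_mul_l; apply fsum_ext; intros j _; rewrite (Hs j i); ring.
Qed.

Lemma fsum_cauchy_schwarz n a b :
  (fsum n (fun c => a c * b c)) ^ 2 <= fsum n (fun c => a c ^ 2) * fsum n (fun c => b c ^ 2).
Proof.
  set (A := fsum n (fun c => a c ^ 2)); set (B := fsum n (fun c => b c ^ 2));
  set (C := fsum n (fun c => a c * b c)).
  assert (HB : 0 <= B) by (apply fsum_nonneg; intros; apply pow2_ge_0).
  destruct (Req_dec B 0) as [HB0|HB0].
  - assert (Hb : forall c, (c < n)%nat -> b c = 0).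
    { intros c Hc.
      assert (b c ^ 2 <= B) by (apply (fsum_term_le n (fun c => b c ^ 2)); auto;
        intros; apply pow2_ge_0).
      nra. }
    assert (HC : C = 0).
    { unfold C; rewrite <- (fsum_zero n); apply fsum_ext; intros c Hc; rewrite Hb; auto; ring. }
    rewrite HC, HB0; nra.
  - (* the quadratic [l |-> sum (a - l b)^2] is nonnegative; take [l = C / B] *)
    set (l := C / B).
    assert (Hq : 0 <= fsum n (fun c => (a c - l * b c) ^ 2))
      by (apply fsum_nonneg; intros; apply pow2_ge_0).
    assert (E : fsum n (fun c => (a c - l * b c) ^ 2) = A - 2 * l * C + l ^ 2 * B).
    { unfold A, B, C; rewrite <- fsum_mul_l, <- (fsum_mul_l n (l ^ 2)), <- fsum_sub,
        <- fsum_add; apply fsum_ext; intros; ring. }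
    assert (0 < B) by lra.
    assert (0 <= A - C ^ 2 / B).
    { replace (A - C ^ 2 / B) with (A - 2 * l * C + l ^ 2 * B) by (unfold l; field; lra); lra. }
    assert (HAB : 0 <= (A - C ^ 2 / B) * B) by (apply Rmult_le_pos; lra).
    replace ((A - C ^ 2 / B) * B) with (A * B - C ^ 2) in HAB by (field; lra); lra.
Qed.

Lemma Rabs_fsum_mul_le n a b :
  Rabs (fsum n (fun c => a c * b c))
  <= sqrt (fsum n (fun c => a c ^ 2)) * sqrt (fsum n (fun c => b c ^ 2)).
Proof.
  rewrite <- sqrt_mult, <- sqrt_Rsqr_abs by (apply fsum_nonneg; intros; apply pow2_ge_0).
  apply sqrt_le_1_alt; eapply Rle_trans; [|apply fsum_cauchy_schwarz]; right; unfold Rsqr; ring.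
Qed.

Lemma fsum_sqr_le n (a : nat -> R) : (fsum n a) ^ 2 <= INR n * fsum n (fun j => a j ^ 2).
Proof.
  replace (fsum n a) with (fsum n (fun j => a j * 1)) by (apply fsum_ext; intros; ring).
  eapply Rle_trans; [apply fsum_cauchy_schwarz|].
  cbv beta; rewrite pow1, fsum_const; lra.
Qed.

Lemma deriv_nonpos_le (f f' : R -> R) a b : a <= b ->
  (forall c, a <= c <= b -> continuity_pt f c) ->
  (forall c, a < c < b -> derivable_pt_lim f c (f' c) /\ f' c <= 0) -> f b <= f a.
Proof.
  intros Hab Hc Hd; destruct (Req_dec a b) as [->|Hne]; [lra|].
  set (pr1 := fun c (P : a < c < b) =>
         exist (fun l => derivable_pt_lim f c l) (f' c) (proj1 (Hd c P))).
  set (pr2 := fun c (_ : a < c < b) => derivable_pt_id c).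
  destruct (MVT f id a b pr1 pr2 ltac:(lra) Hc
             (fun c _ => derivable_continuous_pt _ _ (derivable_pt_id c))) as [c [P HP]].
  unfold pr1, pr2 in HP; simpl in HP; rewrite derive_pt_id in HP; unfold id in HP.
  destruct (Hd c P); nra.
Qed.

Lemma Rabs_sub_le_of_deriv_bound (f f' : R -> R) u w C : u <= w ->
  (forall z, u <= z <= w -> continuity_pt f z) ->
  (forall z, u < z < w -> derivable_pt_lim f z (f' z) /\ Rabs (f' z) <= C) ->
  Rabs (f w - f u) <= C * (w - u).
Proof.
  intros Huw Hc Hd.
  assert (Hid : forall z, continuity_pt (fun z => C * z) z)
    by (intros; apply continuity_pt_scal, derivable_continuous_pt, derivable_pt_id).
  assert (Hid' : forall z, derivable_pt_lim (fun z => C * z) z (C * 1))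
    by (intros; apply derivable_pt_lim_scal, derivable_pt_lim_id).
  assert (A : f w - C * w <= f u - C * u).
  { apply (deriv_nonpos_le (fun z => f z - C * z) (fun z => f' z - C * 1)); auto.
    - intros; apply continuity_pt_minus; auto.
    - intros z Hz; destruct (Hd z Hz) as [D B]; split.
      + apply derivable_pt_lim_minus; auto.
      + generalize (Rle_abs (f' z)); lra. }
  assert (B : - f w - C * w <= - f u - C * u).
  { apply (deriv_nonpos_le (fun z => - f z - C * z) (fun z => - f' z - C * 1)); auto.
    - intros; apply continuity_pt_minus; auto; apply continuity_pt_opp; auto.
    - intros z Hz; destruct (Hd z Hz) as [D B]; split.
      + apply derivable_pt_lim_minus; auto; apply derivable_pt_lim_opp; auto.
      + generalize (Rle_abs (- f' z)); rewrite Rabs_Ropp; lra. }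
  apply Rabs_le; lra.
Qed.

Lemma derivable_pt_lim_fsum n (F : nat -> R -> R) (F' : nat -> R) t :
  (forall i, (i < n)%nat -> derivable_pt_lim (F i) t (F' i)) ->
  derivable_pt_lim (fun u => fsum n (fun i => F i u)) t (fsum n F').
Proof.
  induction n; intros H; simpl; [apply derivable_pt_lim_const|].
  apply (derivable_pt_lim_plus (fun u => fsum n (fun i => F i u)) (F n));
    [apply IHn; intros|]; apply H; lia.
Qed.

Lemma continuity_pt_fsum n (F : nat -> R -> R) t :
  (forall i, (i < n)%nat -> continuity_pt (F i) t) ->
  continuity_pt (fun u => fsum n (fun i => F i u)) t.
Proof.
  induction n; intros H; simpl; [apply continuity_pt_const; intros ? ?; auto|].
  apply (continuity_pt_plus (fun u => fsum n (fun i => F i u)) (F n));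
    [apply IHn; intros|]; apply H; lia.
Qed.

Lemma derivable_pt_lim_sqr f l t :
  derivable_pt_lim f t l -> derivable_pt_lim (fun u => f u ^ 2) t (2 * f t * l).
Proof.
  intros H; replace (2 * f t * l) with (l * f t + f t * l) by ring.
  apply (derivable_pt_lim_ext (fun u => f u * f u)); [intros; ring|].
  apply (derivable_pt_lim_mult f f); auto.
Qed.

Lemma continuity_pt_sqr f t : continuity_pt f t -> continuity_pt (fun u => f u ^ 2) t.
Proof.
  intros H; apply (continuity_pt_locally_ext (fun u => f u * f u) _ 1); [lra|intros; ring|].
  apply continuity_pt_mult; auto.
Qed.

Lemma continuity_pt_Rmax0 (f : R -> R) :
  limit1_in f (fun s => 0 <= s) (f 0) 0 -> (forall t, 0 < t -> continuity_pt f t) ->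
  forall t, continuity_pt (fun s => f (Rmax 0 s)) t.
Proof.
  intros H0 Hp t; destruct (Rtotal_order t 0) as [Ht|[->|Ht]].
  - apply (continuity_pt_locally_ext (fun _ => f 0) _ (- t)); [lra| |].
    + intros y Hy; unfold Rdist in Hy; apply Rabs_def2 in Hy; rewrite Rmax_left; auto; lra.
    + apply continuity_pt_const; intros ? ?; auto.
  - intros eps Heps; destruct (H0 eps Heps) as [alp [Halp Hal]].
    exists alp; split; auto; intros y [_ Hy]; simpl in *; unfold R_dist in *.
    rewrite (Rmax_left 0 0) by lra.
    destruct (Rle_or_lt 0 y) as [Hy0|Hy0].
    + rewrite Rmax_right by auto; apply Hal; split; auto.
    + rewrite Rmax_left by lra; unfold Rminus; rewrite Rplus_opp_r, Rabs_R0; auto.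
  - apply (continuity_pt_locally_ext f _ t); auto.
    intros y Hy; unfold Rdist in Hy; apply Rabs_def2 in Hy; rewrite Rmax_right; auto; lra.
Qed.

Lemma derivable_pt_lim_Rmax0 (f : R -> R) t l : 0 < t -> derivable_pt_lim f t l ->
  derivable_pt_lim (fun s => f (Rmax 0 s)) t l.
Proof.
  intros Ht H; apply (derivable_pt_lim_locally_ext f _ t 0 (t + 1)); auto; [lra|].
  intros z Hz; rewrite Rmax_right; auto; lra.
Qed.

Lemma dist2_sym n p i j : dist2 n p i j = dist2 n p j i.
Proof. unfold dist2, norm2; apply fsum_ext; intros; ring. Qed.

Lemma dist2_nonneg n p i j : 0 <= dist2 n p i j.
Proof. unfold dist2, norm2; apply fsum_nonneg; intros; apply pow2_ge_0. Qed.

Lemma dist2_diag n p i : dist2 n p i i = 0.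
Proof. unfold dist2, norm2; rewrite <- (fsum_zero n); apply fsum_ext; intros; ring. Qed.

Lemma acoef_sym n K sigma beta p i j :
  acoef n K sigma beta p i j = acoef n K sigma beta p j i.
Proof. unfold acoef; rewrite dist2_sym; reflexivity. Qed.

Definition Lambda2 (k n : nat) (w : nat -> nat -> R) : R :=
  / INR k * fsum k (fun i => fsum i (fun j => dist2 n w i j)).

Lemma Lambda_sqrt k n w : Lambda k n w = sqrt (Lambda2 k n w).
Proof. reflexivity. Qed.

Lemma Lambda2_nonneg k n w : 0 <= Lambda2 k n w.
Proof.
  apply Rmult_le_pos.
  - destruct k; [simpl; rewrite Rinv_0; lra|].
    left; apply Rinv_0_lt_compat, lt_0_INR; lia.
  - apply fsum_nonneg; intros; apply fsum_nonneg; intros; apply dist2_nonneg.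
Qed.

Lemma fsum_dist2 k n w : (1 <= k)%nat ->
  fsum k (fun i => fsum k (fun j => dist2 n w i j)) = 2 * INR k * Lambda2 k n w.
Proof.
  intros hk; unfold Lambda2.
  rewrite (fsum_lower_triangle_sym k (fun i j => dist2 n w i j));
    [|apply dist2_sym|apply dist2_diag].
  assert (INR k <> 0) by (apply not_0_INR; lia); field; auto.
Qed.

Lemma norm2_deviation_le k n (w : nat -> nat -> R) i : (1 <= k)%nat ->
  norm2 n (fun c => w i c - avg k w c) <= / INR k * fsum k (fun j => dist2 n w i j).
Proof.
  intros hk; assert (Hk : 0 < INR k) by (apply lt_0_INR; lia).
  unfold norm2, dist2, norm2, avg; rewrite fsum_swap, <- fsum_mul_l.
  apply fsum_le; intros c _.
  replace (w i c - / INR k * fsum k (fun j => w j c))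
    with (/ INR k * fsum k (fun j => w i c - w j c))
    by (rewrite fsum_sub, fsum_const; field; lra).
  rewrite Rpow_mult_distr.
  apply Rle_trans with ((/ INR k) ^ 2 * (INR k * fsum k (fun j => (w i c - w j c) ^ 2))).
  - apply Rmult_le_compat_l; [apply pow_le; left; apply Rinv_0_lt_compat; auto|].
    apply fsum_sqr_le.
  - right; field; lra.
Qed.

Lemma fsum_norm2_deviation_le k n w : (1 <= k)%nat ->
  fsum k (fun i => norm2 n (fun c => w i c - avg k w c)) <= 2 * Lambda2 k n w.
Proof.
  intros hk; assert (Hk : 0 < INR k) by (apply lt_0_INR; lia).
  eapply Rle_trans; [apply fsum_le; intros i _; apply (norm2_deviation_le k n w i hk)|].
  rewrite fsum_mul_l, fsum_dist2 by auto; right; field; lra.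
Qed.

Definition fnet (d0 d1 : R) (theta : nat) (r : R) : R := fpot d0 theta r - fpot d1 theta r.

Definition pair_force (k n : nat) (K sigma beta d0 d1 : R) (theta : nat)
    (p w : nat -> nat -> R) (i j c : nat) : R :=
  acoef n K sigma beta p i j * (w j c - w i c)
  + Lambda k n w * (if Nat.eqb j i then 0
                    else fnet d0 d1 theta (dist2 n p i j) * (p i c - p j c)).

Lemma accel_pair_force k n K sigma beta d0 d1 theta p w i c :
  accel k n K sigma beta d0 d1 theta p w i c
  = fsum k (fun j => pair_force k n K sigma beta d0 d1 theta p w i j c).
Proof.
  unfold accel, pair_force; rewrite fsum_add, fsum_mul_l, <- !fsum_mul_l, Rplus_assoc,
    <- fsum_add.
  f_equal; apply fsum_ext; intros j _; unfold fnet; destruct (Nat.eqb j i); ring.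
Qed.

Lemma pair_force_antisym k n K sigma beta d0 d1 theta p w i j c :
  pair_force k n K sigma beta d0 d1 theta p w j i c
  = - pair_force k n K sigma beta d0 d1 theta p w i j c.
Proof.
  unfold pair_force; rewrite (acoef_sym _ _ _ _ _ j i), (dist2_sym n p j i), (Nat.eqb_sym i j).
  destruct (Nat.eqb j i); ring.
Qed.

Lemma fsum_accel k n K sigma beta d0 d1 theta p w c :
  fsum k (fun i => accel k n K sigma beta d0 d1 theta p w i c) = 0.
Proof.
  setoid_rewrite accel_pair_force; apply fsum_antisym_zero; intros i j.
  rewrite pair_force_antisym; ring.
Qed.

Lemma fsum_inner_antisym k n (w : nat -> nat -> R) (F : nat -> nat -> nat -> R) :
  (forall i j c, F j i c = - F i j c) ->
  fsum k (fun i => fsum n (fun c => w i c * fsum k (fun j => F i j c)))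
  = / 2 * fsum k (fun i => fsum k (fun j => fsum n (fun c => (w i c - w j c) * F i j c))).
Proof.
  intros HF.
  rewrite (fsum_ext k _ (fun i => fsum k (fun j => fsum n (fun c => w i c * F i j c)))).
  - rewrite fsum_symmetrize; f_equal; apply fsum_ext; intros i _; apply fsum_ext; intros j _.
    rewrite <- fsum_add; apply fsum_ext; intros c _; rewrite HF; ring.
  - intros i _; rewrite fsum_swap; apply fsum_ext; intros c _; symmetry; apply fsum_mul_l.
Qed.

Definition alignment_dissipation (k n : nat) (K sigma beta : R) (p w : nat -> nat -> R) : R :=
  / 2 * fsum k (fun i => fsum k (fun j => acoef n K sigma beta p i j * dist2 n w i j)).

Definition potential_rate (k n : nat) (d0 d1 : R) (theta : nat) (p w : nat -> nat -> R) : R :=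
  / 2 * fsum k (fun i => fsum k (fun j => if Nat.eqb j i then 0 else
       fnet d0 d1 theta (dist2 n p i j) * fsum n (fun c => (p i c - p j c) * (w i c - w j c)))).

Lemma fsum_inner_accel k n K sigma beta d0 d1 theta p w :
  fsum k (fun i => fsum n (fun c => w i c * accel k n K sigma beta d0 d1 theta p w i c))
  = - alignment_dissipation k n K sigma beta p w
    + Lambda k n w * potential_rate k n d0 d1 theta p w.
Proof.
  setoid_rewrite accel_pair_force.
  rewrite fsum_inner_antisym by apply pair_force_antisym.
  unfold alignment_dissipation, potential_rate.
  set (A := fun i j => acoef n K sigma beta p i j * dist2 n w i j).
  set (P := fun i j => if Nat.eqb j i then 0 else fnet d0 d1 theta (dist2 n p i j)
                       * fsum n (fun c => (p i c - p j c) * (w i c - w j c))).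
  transitivity (/ 2 * fsum k (fun i => fsum k (fun j => - A i j + Lambda k n w * P i j))).
  - f_equal; apply fsum_ext; intros i _; apply fsum_ext; intros j _.
    unfold A, P, pair_force, dist2, norm2; destruct (Nat.eqb j i).
    + rewrite Rmult_0_r, Rplus_0_r, <- fsum_mul_l, <- fsum_opp; apply fsum_ext; intros; ring.
    + rewrite <- !fsum_mul_l, <- fsum_opp, <- fsum_add; apply fsum_ext; intros; ring.
  - setoid_rewrite fsum_add; setoid_rewrite fsum_opp; setoid_rewrite fsum_mul_l.
    rewrite fsum_add, fsum_opp, fsum_mul_l; unfold A, P; cbv beta; ring.
Qed.

Lemma Lambda2_rate k n K sigma beta d0 d1 theta p w : (1 <= k)%nat ->
  let a := accel k n K sigma beta d0 d1 theta p w in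
  / INR k * fsum k (fun i => fsum i (fun j =>
     fsum n (fun c => 2 * (w i c - w j c) * (a i c - a j c))))
  = 2 * (- alignment_dissipation k n K sigma beta p w
         + Lambda k n w * potential_rate k n d0 d1 theta p w).
Proof.
  intros hk a; assert (Hk : INR k <> 0) by (apply not_0_INR; lia).
  rewrite <- fsum_inner_accel; fold a.
  rewrite fsum_lower_triangle_sym;
    [| intros i j; apply fsum_ext; intros; ring
     | intros i; rewrite <- (fsum_zero n); apply fsum_ext; intros; ring].
  (* pairing [a_i - a_j] against [w] and using [sum_j a_j = 0] *)
  assert (Hpair := fsum_inner_antisym k n w (fun i j c => a i c - a j c)
                     ltac:(intros; cbv beta; ring)).
  cbv beta in Hpair.
  rewrite (fsum_ext k (fun i => fsum n (fun c => w i c * fsum k (fun j => a i c - a j c)))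
             (fun i => INR k * fsum n (fun c => w i c * a i c))) in Hpair.
  - rewrite fsum_mul_l in Hpair.
    rewrite (fsum_ext k _ (fun i => 2 * fsum k (fun j =>
               fsum n (fun c => (w i c - w j c) * (a i c - a j c))))).
    + rewrite fsum_mul_l; field_simplify_eq; [lra|auto].
    + intros i _; rewrite <- fsum_mul_l; apply fsum_ext; intros j _.
      rewrite <- fsum_mul_l; apply fsum_ext; intros; ring.
  - intros i _; rewrite <- fsum_mul_l; apply fsum_ext; intros c _.
    rewrite fsum_sub, fsum_const; unfold a; rewrite fsum_accel; ring.
Qed.

Lemma derivable_pt_lim_neg_inv_pow m u : (1 <= m)%nat -> u <> 0 ->
  derivable_pt_lim (fun y => - / (INR m * y ^ m)) u (/ u ^ S m).
Proof.
  intros hm hu; assert (Hm : INR m <> 0) by (apply not_0_INR; lia).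
  assert (Hum : u ^ m <> 0) by (apply pow_nonzero; auto).
  apply (derivable_pt_lim_ext (fun y => - 1 / (INR m * y ^ m))); [intros; unfold Rdiv; ring|].
  replace (/ u ^ S m) with ((0 * (INR m * u ^ m) - INR m * (INR m * u ^ pred m) * - 1)
                            / Rsqr (INR m * u ^ m)).
  - apply (derivable_pt_lim_div (fun _ => - 1) (fun y => INR m * y ^ m));
      [apply derivable_pt_lim_const| |apply Rmult_integral_contrapositive; auto].
    apply derivable_pt_lim_scal, derivable_pt_lim_pow.
  - destruct m as [|m]; [lia|]; unfold Rsqr; simpl pred; simpl pow.
    field; repeat split; auto; apply pow_nonzero; auto.
Qed.

(** Primitive of [fnet d0 d1 (S m)] on [(d0, d1)], for even [S m]. *)
Definition pair_potential (d0 d1 : R) (m : nat) (r : R) : R :=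
  - / (INR m * (r - d0) ^ m) - / (INR m * (d1 - r) ^ m).

Lemma fnet_even d0 d1 m r : Nat.Even m ->
  fnet d0 d1 m r = / (r - d0) ^ m - / (d1 - r) ^ m.
Proof.
  intros [q ->]; unfold fnet, fpot; rewrite !pow_mult.
  replace ((r - d1) ^ 2) with ((d1 - r) ^ 2) by ring; reflexivity.
Qed.

Lemma derivable_pt_lim_pair_potential d0 d1 m r :
  (1 <= m)%nat -> Nat.Even (S m) -> d0 < r < d1 ->
  derivable_pt_lim (pair_potential d0 d1 m) r (fnet d0 d1 (S m) r).
Proof.
  intros hm he Hr; rewrite fnet_even by auto; unfold pair_potential.
  set (F := fun y => - / (INR m * y ^ m)).
  apply (derivable_pt_lim_ext (fun y => F (y - d0) + F (d1 - y))); [intros; unfold F; ring|].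
  replace (/ (r - d0) ^ S m - / (d1 - r) ^ S m)
    with (/ (r - d0) ^ S m * (1 - 0) + / (d1 - r) ^ S m * (0 - 1)) by ring.
  apply (derivable_pt_lim_plus (fun y => F (y - d0)) (fun y => F (d1 - y)));
    apply (derivable_pt_lim_comp _ F).
  - apply derivable_pt_lim_minus; [apply derivable_pt_lim_id|apply derivable_pt_lim_const].
  - apply derivable_pt_lim_neg_inv_pow; auto; lra.
  - apply derivable_pt_lim_minus; [apply derivable_pt_lim_const|apply derivable_pt_lim_id].
  - apply derivable_pt_lim_neg_inv_pow; auto; lra.
Qed.

Lemma continuity_pt_pair_potential d0 d1 m r :
  (1 <= m)%nat -> Nat.Even (S m) -> d0 < r < d1 -> continuity_pt (pair_potential d0 d1 m) r.
Proof.
  intros; apply derivable_continuous_pt; eexists; apply derivable_pt_lim_pair_potential; auto.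
Qed.

Lemma pair_potential_terms_pos d0 d1 m r : (1 <= m)%nat -> d0 < r < d1 ->
  0 < / (INR m * (r - d0) ^ m) /\ 0 < / (INR m * (d1 - r) ^ m).
Proof.
  intros hm Hr; assert (1 <= INR m) by (apply (le_INR 1); lia).
  split; apply Rinv_0_lt_compat, Rmult_lt_0_compat; try lra; apply pow_lt; lra.
Qed.

Lemma pair_potential_nonpos d0 d1 m r : (1 <= m)%nat -> d0 < r < d1 ->
  pair_potential d0 d1 m r <= 0.
Proof.
  intros hm Hr; destruct (pair_potential_terms_pos d0 d1 m r hm Hr).
  unfold pair_potential; lra.
Qed.

Lemma lower_bound_of_inv_pow_le m u B : (1 <= m)%nat -> 0 < u ->
  / (INR m * u ^ m) <= B -> / (INR m * B + 1) <= u.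
Proof.
  intros hm hu H; assert (Hm : 1 <= INR m) by (apply (le_INR 1); lia).
  assert (Hp : 0 < u ^ m) by (apply pow_lt; auto).
  assert (HB : 0 < B) by (eapply Rlt_le_trans; [|apply H]; apply Rinv_0_lt_compat; nra).
  destruct (Rle_or_lt 1 u) as [Hu|Hu].
  - apply Rle_trans with 1; auto; rewrite <- Rinv_1; apply Rinv_le_contravar; nra.
  - assert (Hum : u ^ m <= u).
    { destruct m as [|m]; [lia|]; simpl.
      assert (u ^ m <= 1) by (rewrite <- (pow1 m); apply pow_incr; lra); nra. }
    assert (H2 : 1 <= B * (INR m * u ^ m)).
    { apply Rmult_le_compat_r with (r := INR m * u ^ m) in H; [|nra].
      rewrite Rinv_l in H; nra. }
    apply Rmult_le_reg_r with (INR m * B + 1); [nra|]; rewrite Rinv_l; nra.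
Qed.

Lemma pair_potential_ge_separation d0 d1 m r B : (1 <= m)%nat -> d0 < r < d1 ->
  - B <= pair_potential d0 d1 m r ->
  / (INR m * B + 1) <= r - d0 /\ / (INR m * B + 1) <= d1 - r.
Proof.
  intros hm Hr H; destruct (pair_potential_terms_pos d0 d1 m r hm Hr).
  unfold pair_potential in H; split; apply lower_bound_of_inv_pow_le; auto; lra.
Qed.

Lemma Rabs_fnet_le d0 d1 m r del : Nat.Even m -> 0 < del ->
  del <= r - d0 -> del <= d1 - r -> Rabs (fnet d0 d1 m r) <= 2 / del ^ m.
Proof.
  intros He Hd H0 H1; rewrite fnet_even by auto.
  assert (A : forall u, del <= u -> 0 < / u ^ m <= / del ^ m).
  { intros u Hu; split; [apply Rinv_0_lt_compat, pow_lt; lra|].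
    apply Rinv_le_contravar; [apply pow_lt; lra|apply pow_incr; lra]. }
  destruct (A _ H0), (A _ H1); unfold Rdiv; apply Rabs_le; lra.
Qed.

Lemma continuity_pt_fnet d0 d1 theta r : r <> d0 -> r <> d1 ->
  continuity_pt (fnet d0 d1 theta) r.
Proof.
  intros H0 H1.
  assert (Hf : forall d, r <> d -> continuity_pt (fpot d theta) r).
  { intros d Hd; apply continuity_pt_inv; [|apply pow_nonzero; lra].
    apply derivable_continuous_pt; eexists.
    apply (derivable_pt_lim_comp (fun y => y - d) (fun y => y ^ theta));
      [apply derivable_pt_lim_minus; [apply derivable_pt_lim_id|apply derivable_pt_lim_const]
      |apply derivable_pt_lim_pow]. }
  apply continuity_pt_minus; auto.
Qed.

Lemma acoef_bounds n K sigma beta d1 p i j : 0 < K -> 0 < sigma -> 0 < beta ->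
  dist2 n p i j <= d1 ->
  K / Rpower (sigma ^ 2 + d1) beta <= acoef n K sigma beta p i j
  <= K / Rpower (sigma ^ 2) beta.
Proof.
  intros hK hs hb Hd; unfold acoef, Rdiv; assert (H0 := dist2_nonneg n p i j).
  assert (Hs2 : 0 < sigma ^ 2) by (apply pow_lt; auto).
  assert (Hpos : forall y, 0 < Rpower y beta) by (intros; unfold Rpower; apply exp_pos).
  split; apply Rmult_le_compat_l; try lra; apply Rinv_le_contravar; auto;
    apply Rle_Rpower_l; lra.
Qed.

Lemma alignment_dissipation_bounds k n K sigma beta p w amin amax : (1 <= k)%nat ->
  (forall i j, (i < k)%nat -> (j < k)%nat -> amin <= acoef n K sigma beta p i j <= amax) ->
  amin * INR k * Lambda2 k n w <= alignment_dissipation k n K sigma beta p w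
  <= amax * INR k * Lambda2 k n w.
Proof.
  intros hk H; unfold alignment_dissipation.
  assert (E : forall a, a * INR k * Lambda2 k n w
                        = / 2 * fsum k (fun i => fsum k (fun j => a * dist2 n w i j))).
  { intros a; setoid_rewrite fsum_mul_l; rewrite fsum_mul_l, fsum_dist2 by auto; field. }
  rewrite !E; split; apply Rmult_le_compat_l; try lra;
    apply fsum_le; intros i Hi; apply fsum_le; intros j Hj;
    apply Rmult_le_compat_r; try apply dist2_nonneg; apply H; auto.
Qed.

Definition potential_rate_gain (k n : nat) (d0 d1 : R) (theta : nat) (p : nat -> nat -> R) : R :=
  / 2 * fsum k (fun i => fsum k (fun j => if Nat.eqb j i then 0 else
      Rabs (fnet d0 d1 theta (dist2 n p i j)) * sqrt (dist2 n p i j))) * sqrt (2 * INR k).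

Lemma potential_rate_gain_nonneg k n d0 d1 theta p : 0 <= potential_rate_gain k n d0 d1 theta p.
Proof.
  unfold potential_rate_gain; apply Rmult_le_pos; [|apply sqrt_pos].
  apply Rmult_le_pos; [lra|]; apply fsum_nonneg; intros i _; apply fsum_nonneg; intros j _.
  destruct (Nat.eqb j i); [lra|]; apply Rmult_le_pos; [apply Rabs_pos|apply sqrt_pos].
Qed.

Lemma Rabs_potential_rate_le k n d0 d1 theta p w : (1 <= k)%nat ->
  Rabs (potential_rate k n d0 d1 theta p w)
  <= potential_rate_gain k n d0 d1 theta p * Lambda k n w.
Proof.
  intros hk; unfold potential_rate, potential_rate_gain.
  assert (H2k : 0 <= 2 * INR k) by (generalize (pos_INR k); lra).
  rewrite Rabs_mult, Rabs_right by lra.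
  (* each pair is bounded by Cauchy-Schwarz and [|w_i - w_j|^2 <= 2 k Lambda^2] *)
  assert (Hw : forall i j, (i < k)%nat -> (j < k)%nat ->
                 sqrt (dist2 n w i j) <= sqrt (2 * INR k) * Lambda k n w).
  { intros i j Hi Hj; rewrite Lambda_sqrt, <- sqrt_mult by auto using Lambda2_nonneg.
    apply sqrt_le_1_alt; rewrite <- fsum_dist2 by auto.
    eapply Rle_trans; [apply (fsum_term_le k (fun j => dist2 n w i j) j)|];
      auto; [intros; apply dist2_nonneg|].
    apply (fsum_term_le k (fun i => fsum k (fun j => dist2 n w i j))); auto.
    intros; apply fsum_nonneg; intros; apply dist2_nonneg. }
  rewrite !Rmult_assoc; apply Rmult_le_compat_l; [lra|].
  eapply Rle_trans; [apply Rabs_fsum_le|]; rewrite <- fsum_mul_r; apply fsum_le; intros i Hi.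
  eapply Rle_trans; [apply Rabs_fsum_le|]; rewrite <- fsum_mul_r; apply fsum_le; intros j Hj.
  destruct (Nat.eqb j i); [rewrite Rabs_R0, Rmult_0_l; lra|].
  rewrite Rabs_mult, !Rmult_assoc; apply Rmult_le_compat_l; [apply Rabs_pos|].
  eapply Rle_trans; [apply Rabs_fsum_mul_le|]; apply Rmult_le_compat_l; [apply sqrt_pos|].
  apply Hw; auto.
Qed.

Lemma sqrt_plus_sqr_le a e : 0 <= a -> 0 <= e -> sqrt (a + e ^ 2) <= sqrt a + e.
Proof.
  intros Ha He; generalize (sqrt_pos a); intros.
  rewrite <- (sqrt_pow2 (sqrt a + e)) by lra; apply sqrt_le_1_alt.
  rewrite <- (sqrt_sqrt a) at 1 by auto; nra.
Qed.

(** Pointwise rate estimate behind [sqrt_energy_nonincreasing]: here [a = sqrt S] and the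
    square root is regularized by [e] so that it stays differentiable where [S = 0]. *)
Lemma regularized_energy_rate_nonpos a e c H S' P' Q' :
  0 <= a -> 0 < e -> 0 <= c -> 0 <= H ->
  S' <= - 2 * c * (a * a) + 2 * a * P' -> Rabs P' <= H * a -> Q' <= c * a ->
  S' * / (2 * sqrt (a * a + e ^ 2)) - P' + Q' - (c + H) * e * 1 <= 0.
Proof.
  intros Ha He hc hH HS HP HQ; set (b := sqrt (a * a + e ^ 2)).
  assert (Hb2 : b * b = a * a + e ^ 2) by (apply sqrt_sqrt; nra).
  assert (Hb : 0 < b) by (apply sqrt_lt_R0; nra).
  assert (Hab : a <= b) by (rewrite <- (sqrt_square a) by auto; apply sqrt_le_1_alt; nra).
  assert (Hbe : b - a <= e).
  { assert ((b - a) * (b + a) = e * e) by nra.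
    apply Rmult_le_reg_r with (b + a); nra. }
  assert (Hq : a * (b - a) <= e * b) by nra.
  assert (Hp : - P' * (b - a) <= H * e * b).
  { assert (- P' <= H * a) by (generalize (Rle_abs (- P')); rewrite Rabs_Ropp; lra); nra. }
  assert (K1 : S' * / (2 * b) <= (- 2 * c * (a * a) + 2 * a * P') * / (2 * b))
    by (apply Rmult_le_compat_r; [left; apply Rinv_0_lt_compat; lra|auto]).
  assert (K2 : (- 2 * c * (a * a) + 2 * a * P') * / (2 * b) - P' + c * a - (c + H) * e * 1
               = (c * (a * (b - a)) + (- P' * (b - a)) - (c + H) * e * b) / b)
    by (field; lra).
  assert ((c * (a * (b - a)) + (- P' * (b - a)) - (c + H) * e * b) / b <= 0).
  { assert (c * (a * (b - a)) <= c * (e * b)) by (apply Rmult_le_compat_l; auto).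
    unfold Rdiv; assert (0 < / b) by (apply Rinv_0_lt_compat; lra); nra. }
  lra.
Qed.

Lemma sqrt_energy_nonincreasing (S P Q S' P' Q' : R -> R) s t c H :
  s <= t -> 0 <= c -> 0 <= H ->
  (forall u, s <= u <= t ->
     continuity_pt S u /\ continuity_pt P u /\ continuity_pt Q u /\ 0 <= S u) ->
  (forall u, s < u < t ->
     derivable_pt_lim S u (S' u) /\ derivable_pt_lim P u (P' u) /\ derivable_pt_lim Q u (Q' u)
     /\ S' u <= - 2 * c * S u + 2 * sqrt (S u) * P' u
     /\ Rabs (P' u) <= H * sqrt (S u) /\ Q' u <= c * sqrt (S u)) ->
  sqrt (S t) - P t + Q t <= sqrt (S s) - P s + Q s.
Proof.
  intros hst hc hH Hc Hd; set (C := 1 + (c + H) * (t - s)).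
  assert (HC : 1 <= C) by (unfold C; nra).
  apply Rle_plus_epsilon; intros eps Heps; set (e := eps / C).
  assert (He : 0 < e) by (apply Rdiv_lt_0_compat; lra).
  set (Z := fun u => sqrt (S u + e ^ 2) - P u + Q u - (c + H) * e * u).
  assert (Hz : Z t <= Z s).
  { apply (deriv_nonpos_le Z
      (fun u => S' u * / (2 * sqrt (S u + e ^ 2)) - P' u + Q' u - (c + H) * e * 1)); auto.
    - intros u Hu; destruct (Hc u Hu) as (C1 & C2 & C3 & C4); unfold Z.
      repeat apply continuity_pt_minus || apply continuity_pt_plus; auto.
      + apply (continuity_pt_comp (fun u => S u + e ^ 2) sqrt);
          [apply continuity_pt_plus; auto; apply continuity_pt_const; intros ? ?; auto|].
        apply continuity_pt_sqrt; nra.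
      + apply continuity_pt_scal, derivable_continuous_pt, derivable_pt_id.
    - intros u Hu; destruct (Hd u Hu) as (D1 & D2 & D3 & I1 & I2 & I3).
      assert (Hs0 : 0 <= S u) by (apply Hc; lra).
      split.
      + unfold Z; apply derivable_pt_lim_minus; [apply derivable_pt_lim_plus;
          [apply derivable_pt_lim_minus|]|]; auto.
        * rewrite Rmult_comm; apply (derivable_pt_lim_comp (fun u => S u + e ^ 2) sqrt).
          -- rewrite <- (Rplus_0_r (S' u)); apply derivable_pt_lim_plus; auto.
             apply derivable_pt_lim_const.
          -- apply derivable_pt_lim_sqrt; nra.
        * apply derivable_pt_lim_scal, derivable_pt_lim_id.
      + rewrite <- (sqrt_sqrt (S u)) at 1 by auto.
        apply regularized_energy_rate_nonpos; auto; [apply sqrt_pos|].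
        rewrite sqrt_sqrt; auto. }
  unfold Z in Hz.
  assert (sqrt (S t) <= sqrt (S t + e ^ 2)) by (apply sqrt_le_1_alt; nra).
  assert (sqrt (S s + e ^ 2) <= sqrt (S s) + e) by (apply sqrt_plus_sqr_le; [apply Hc|]; lra).
  assert (HeC : e * C = eps) by (unfold e; field; lra).
  unfold C in HeC; nra.
Qed.

(** Barbalat-type argument: the energy [sqrt S - P] is nonincreasing and bounded below, and
    it drops by a fixed amount on every interval of fixed length on which [sqrt S >= eta];
    since [S] is Lipschitz, [sqrt S(t) >= eta] forces such an interval after [t]. *)
Lemma sqrt_vanishes_of_energy_decay (S P : R -> R) c C :
  0 < c ->
  (forall u, 0 <= u -> 0 <= S u) ->
  (forall u, 0 <= u -> P u <= 0) ->
  (forall u w, 0 <= u <= w -> sqrt (S w) - P w <= sqrt (S u) - P u) ->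
  (forall u w, 0 <= u <= w -> Rabs (S w - S u) <= C * (w - u)) ->
  (forall u w eta, 0 <= u <= w -> 0 < eta -> (forall z, u <= z <= w -> eta <= sqrt (S z)) ->
       sqrt (S w) - P w + c * eta * w <= sqrt (S u) - P u + c * eta * u) ->
  forall eta, 0 < eta -> exists T, 0 <= T /\ forall t, T <= t -> sqrt (S t) < eta.
Proof.
  intros hc HS HP Hmono HL Hstr eta Heta.
  set (E := fun u => sqrt (S u) - P u).
  assert (HE : forall u, 0 <= u -> 0 <= E u)
    by (intros u Hu; unfold E; generalize (sqrt_pos (S u)) (HP u Hu); lra).
  set (A := fun y => exists u, 0 <= u /\ y = - E u).
  assert (Hb : bound A) by (exists 0; intros y [u [Hu ->]]; generalize (HE u Hu); lra).
  destruct (completeness A Hb (ex_intro _ (- E 0) (ex_intro _ 0 (conj (Rle_refl 0) eq_refl))))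
    as [m [Hub Hlub]].
  set (C' := Rmax C 1); assert (HC1 : 1 <= C') by apply Rmax_r.
  assert (HCC : C <= C') by apply Rmax_l.
  set (del := 3 * eta ^ 2 / (4 * C')).
  assert (Hdel : 0 < del) by (unfold del; apply Rdiv_lt_0_compat; nra).
  set (gap := c * (eta / 2) * del).
  assert (Hgap : 0 < gap) by (unfold gap; apply Rmult_lt_0_compat; [nra|auto]).
  assert (Hu0 : exists u0, 0 <= u0 /\ - E u0 > m - gap).
  { apply NNPP; intros H.
    assert (Hm : is_upper_bound A (m - gap)).
    { intros y [u [Hu ->]]; apply Rnot_lt_le; intros Hlt; apply H; exists u; auto. }
    specialize (Hlub _ Hm); lra. }
  destruct Hu0 as [T [HT HTE]]; exists T; split; auto; intros t Ht.
  apply Rnot_le_lt; intros Hge.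
  assert (Hst : eta ^ 2 <= S t).
  { rewrite <- (sqrt_sqrt (S t)) by (apply HS; lra); simpl; rewrite Rmult_1_r.
    apply Rmult_le_compat; lra. }
  assert (Hlow : forall z, t <= z <= t + del -> eta / 2 <= sqrt (S z)).
  { intros z Hz; assert (H1 := HL t z ltac:(lra)).
    assert (H2 := Rle_abs (- (S z - S t))); rewrite Rabs_Ropp in H2.
    assert (C * (z - t) <= C' * (z - t)) by (apply Rmult_le_compat_r; lra).
    assert (C' * (z - t) <= C' * del) by (apply Rmult_le_compat_l; lra).
    assert (C' * del = 3 * eta ^ 2 / 4) by (unfold del; field; lra).
    rewrite <- (sqrt_pow2 (eta / 2)) by lra; apply sqrt_le_1_alt.
    replace ((eta / 2) ^ 2) with (eta ^ 2 / 4) by field; lra. }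
  assert (Hs := Hstr t (t + del) (eta / 2) ltac:(lra) ltac:(lra) Hlow).
  assert (Hm1 := Hmono T t ltac:(lra)).
  assert (Hm2 : - E (t + del) <= m) by (apply Hub; exists (t + del); split; [lra|auto]).
  unfold E, gap in *; nra.
Qed.

Lemma continuity_pt_pair_fsum k (F : nat -> nat -> R -> R) t :
  (forall i j, (i < k)%nat -> (j < k)%nat -> i <> j -> continuity_pt (F i j) t) ->
  continuity_pt (fun s => fsum k (fun i => fsum k (fun j =>
                   if Nat.eqb j i then 0 else F i j s))) t.
Proof.
  intros H; apply (continuity_pt_fsum k (fun i s => fsum k (fun j => _))); intros i Hi.
  apply (continuity_pt_fsum k (fun j s => if Nat.eqb j i then 0 else F i j s)); intros j Hj.
  destruct (Nat.eqb j i) eqn:E; [apply continuity_pt_const; intros ? ?; auto|].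
  apply Nat.eqb_neq in E; apply H; auto.
Qed.

Lemma derivable_pt_lim_pair_fsum k (F : nat -> nat -> R -> R) (F' : nat -> nat -> R) t :
  (forall i j, (i < k)%nat -> (j < k)%nat -> i <> j -> derivable_pt_lim (F i j) t (F' i j)) ->
  derivable_pt_lim (fun s => fsum k (fun i => fsum k (fun j =>
                      if Nat.eqb j i then 0 else F i j s)))
    t (fsum k (fun i => fsum k (fun j => if Nat.eqb j i then 0 else F' i j))).
Proof.
  intros H; apply (derivable_pt_lim_fsum k (fun i s => fsum k (fun j => _))); intros i Hi.
  apply (derivable_pt_lim_fsum k (fun j s => if Nat.eqb j i then 0 else F i j s)); intros j Hj.
  destruct (Nat.eqb j i) eqn:E; [apply derivable_pt_lim_const|].
  apply Nat.eqb_neq in E; apply H; auto.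
Qed.

Lemma continuity_pt_dist2 (y : R -> nat -> nat -> R) n i j t :
  (forall c, (c < n)%nat -> continuity_pt (fun s => y s i c) t /\ continuity_pt (fun s => y s j c) t) ->
  continuity_pt (fun s => dist2 n (y s) i j) t.
Proof.
  intros H; apply (continuity_pt_fsum n (fun c s => (y s i c - y s j c) ^ 2)); intros c Hc.
  destruct (H c Hc); apply (continuity_pt_sqr (fun s => y s i c - y s j c)).
  apply continuity_pt_minus; auto.
Qed.

Lemma derivable_pt_lim_dist2 (y : R -> nat -> nat -> R) (y' : nat -> nat -> R) n i j t :
  (forall c, (c < n)%nat ->
     derivable_pt_lim (fun s => y s i c) t (y' i c) /\ derivable_pt_lim (fun s => y s j c) t (y' j c)) ->
  derivable_pt_lim (fun s => dist2 n (y s) i j) t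
    (fsum n (fun c => 2 * (y t i c - y t j c) * (y' i c - y' j c))).
Proof.
  intros H; apply (derivable_pt_lim_fsum n (fun c s => (y s i c - y s j c) ^ 2)); intros c Hc.
  destruct (H c Hc); apply (derivable_pt_lim_sqr (fun s => y s i c - y s j c)).
  apply derivable_pt_lim_minus; auto.
Qed.

Definition potential (k n : nat) (d0 d1 : R) (m : nat) (p : nat -> nat -> R) : R :=
  / 4 * fsum k (fun i => fsum k (fun j =>
          if Nat.eqb j i then 0 else pair_potential d0 d1 m (dist2 n p i j))).

Lemma potential_nonpos k n d0 d1 m p : (1 <= m)%nat ->
  (forall i j, (i < k)%nat -> (j < k)%nat -> i <> j -> d0 < dist2 n p i j < d1) ->
  potential k n d0 d1 m p <= 0.
Proof.
  intros hm Hr; unfold potential.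
  enough (fsum k (fun i => fsum k (fun j => if Nat.eqb j i then 0
            else pair_potential d0 d1 m (dist2 n p i j))) <= 0) by lra.
  apply fsum_nonpos; intros i Hi; apply fsum_nonpos; intros j Hj.
  destruct (Nat.eqb j i) eqn:E; [lra|]; apply Nat.eqb_neq in E.
  apply pair_potential_nonpos; auto.
Qed.

Lemma potential_le_pair_potential k n d0 d1 m p i j : (1 <= m)%nat ->
  (forall i j, (i < k)%nat -> (j < k)%nat -> i <> j -> d0 < dist2 n p i j < d1) ->
  (i < k)%nat -> (j < k)%nat -> i <> j ->
  4 * potential k n d0 d1 m p <= pair_potential d0 d1 m (dist2 n p i j).
Proof.
  intros hm Hr Hi Hj Hij; unfold potential.
  set (T := fun i j => if Nat.eqb j i then 0 else pair_potential d0 d1 m (dist2 n p i j)).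
  assert (HT : forall a b, (a < k)%nat -> (b < k)%nat -> T a b <= 0).
  { intros a b Ha Hb; unfold T; destruct (Nat.eqb b a) eqn:E; [lra|].
    apply Nat.eqb_neq in E; apply pair_potential_nonpos; auto. }
  assert (HTij : T i j = pair_potential d0 d1 m (dist2 n p i j)).
  { unfold T; destruct (Nat.eqb j i) eqn:E; auto; apply Nat.eqb_eq in E; lia. }
  rewrite <- HTij; replace (4 * (/ 4 * _)) with (fsum k (fun i => fsum k (fun j => T i j)))
    by (unfold T; field).
  eapply Rle_trans; [apply (fsum_le_term k (fun i => fsum k (fun j => T i j)) i)|]; auto.
  - intros a Ha; apply fsum_nonpos; auto.
  - apply fsum_le_term; auto.
Qed.

(** Solutions are only known to be differentiable for [t > 0]; freezing them on [t <= 0]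
    makes every quantity along a trajectory continuous on all of [R]. *)
Definition extend0 (y : R -> nat -> nat -> R) (t : R) : nat -> nat -> R := y (Rmax 0 t).

Lemma extend0_nonneg y t : 0 <= t -> extend0 y t = y t.
Proof. intros; unfold extend0; rewrite Rmax_right; auto. Qed.

Section Solution.

Variables (k n : nat) (K sigma beta d0 d1 : R) (m : nat) (x v : R -> nat -> nat -> R).
Hypotheses (hk : (1 <= k)%nat) (hm : (1 <= m)%nat) (heven : Nat.Even (S m)).
Hypotheses (hK : 0 < K) (hsigma : 0 < sigma) (hbeta : 0 < beta).
Hypotheses (hd0 : 0 < d0) (hd01 : d0 < d1).
Hypothesis hinit : forall i j, (i < k)%nat -> (j < k)%nat -> i <> j ->
  d0 < dist2 n (x 0) i j < d1.
Hypothesis hsol : is_solution k n K sigma beta d0 d1 (S m) x v.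

Local Notation X := (extend0 x).
Local Notation V := (extend0 v).

Lemma solution_continuity i c t : (i < k)%nat -> (c < n)%nat ->
  continuity_pt (fun s => X s i c) t /\ continuity_pt (fun s => V s i c) t.
Proof.
  destruct hsol as [_ [Hd H0]]; intros Hi Hc; destruct (H0 i c Hi Hc).
  split; apply (continuity_pt_Rmax0 (fun s => _ s i c)); auto; intros u Hu;
    apply derivable_continuous_pt; eexists; apply (Hd u Hu i c Hi Hc).
Qed.

Lemma solution_derivative t i c : 0 < t -> (i < k)%nat -> (c < n)%nat ->
  derivable_pt_lim (fun s => X s i c) t (V t i c) /\
  derivable_pt_lim (fun s => V s i c) t (accel k n K sigma beta d0 d1 (S m) (X t) (V t) i c).
Proof.
  destruct hsol as [_ [Hd _]]; intros Ht Hi Hc; rewrite !extend0_nonneg by lra.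
  destruct (Hd t Ht i c Hi Hc); split; apply (derivable_pt_lim_Rmax0 (fun s => _ s i c)); auto.
Qed.

Lemma continuity_pt_dist2_X i j t : (i < k)%nat -> (j < k)%nat ->
  continuity_pt (fun s => dist2 n (X s) i j) t.
Proof.
  intros Hi Hj; apply continuity_pt_dist2; intros c Hc.
  split; apply solution_continuity; auto.
Qed.

(** By the intermediate value theorem: a solution never reaches [d0] or [d1]. *)
Lemma dist2_in_range t i j : (i < k)%nat -> (j < k)%nat -> i <> j ->
  d0 < dist2 n (X t) i j < d1.
Proof.
  intros Hi Hj Hij; set (f := fun s => dist2 n (X s) i j); change (d0 < f t < d1).
  assert (Hc : continuity f) by (intros s; apply continuity_pt_dist2_X; auto).
  assert (Hav : forall s, 0 <= s -> f s <> d0 /\ f s <> d1)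
    by (intros s Hs; unfold f; rewrite extend0_nonneg by auto; apply hsol; auto).
  assert (H0 : d0 < f 0 < d1) by (unfold f; rewrite extend0_nonneg by lra; auto).
  assert (Ht : f t = f (Rmax 0 t)) by (unfold f, extend0; rewrite (Rmax_right 0 (Rmax 0 t));
    auto; apply Rmax_l).
  rewrite Ht; generalize (Rmax_l 0 t); generalize (Rmax 0 t).
  clear t Ht; intros t Ht; destruct (Req_dec t 0) as [->|Hne]; auto.
  assert (Htp : 0 < t) by lra.
  destruct (Hav t Ht) as [N0 N1]; split; apply Rnot_le_lt; intros Hle;
    destruct (Rle_lt_or_eq_dec _ _ Hle) as [Hlt|]; try congruence.
  - destruct (IVT (fun s => d0 - f s) 0 t) as [z [Hz Hz0]]; try lra.
    + apply continuity_minus; auto; apply continuity_const; intros ? ?; auto.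
    + apply (proj1 (Hav z ltac:(lra))); lra.
  - destruct (IVT (fun s => f s - d1) 0 t) as [z [Hz Hz0]]; try lra.
    + apply continuity_minus; auto; apply continuity_const; intros ? ?; auto.
    + apply (proj2 (Hav z ltac:(lra))); lra.
Qed.

Let Sv t := Lambda2 k n (V t).
Let Pv t := potential k n d0 d1 m (X t).
Let Gv t := potential_rate_gain k n d0 d1 (S m) (X t).
Let Av t := alignment_dissipation k n K sigma beta (X t) (V t).
Let Pv' t := potential_rate k n d0 d1 (S m) (X t) (V t).
Let kappa := K / Rpower (sigma ^ 2 + d1) beta * INR k.

Lemma kappa_pos : 0 < kappa.
Proof.
  apply Rmult_lt_0_compat; [|apply lt_0_INR; lia].
  apply Rdiv_lt_0_compat; auto; unfold Rpower; apply exp_pos.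
Qed.

Lemma Sv_nonneg t : 0 <= Sv t.
Proof. apply Lambda2_nonneg. Qed.

Lemma Sv_continuity t : continuity_pt Sv t.
Proof.
  apply continuity_pt_scal.
  apply (continuity_pt_fsum k (fun i s => fsum i (fun j => dist2 n (V s) i j))); intros i Hi.
  apply (continuity_pt_fsum i (fun j s => dist2 n (V s) i j)); intros j Hj.
  apply continuity_pt_dist2; intros c Hc; split; apply solution_continuity; auto; lia.
Qed.

Lemma Sv_derivative t : 0 < t -> derivable_pt_lim Sv t (2 * (- Av t + Lambda k n (V t) * Pv' t)).
Proof.
  intros Ht; unfold Sv, Av, Pv'; rewrite <- Lambda2_rate by auto.
  apply derivable_pt_lim_scal.
  apply (derivable_pt_lim_fsum k (fun i s => fsum i (fun j => dist2 n (V s) i j))); intros i Hi.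
  apply (derivable_pt_lim_fsum i (fun j s => dist2 n (V s) i j)); intros j Hj.
  apply (derivable_pt_lim_dist2 V); intros c Hc; split; apply solution_derivative; auto; lia.
Qed.

Lemma Pv_continuity t : continuity_pt Pv t.
Proof.
  apply continuity_pt_scal, continuity_pt_pair_fsum; intros i j Hi Hj Hij.
  apply (continuity_pt_comp (fun s => dist2 n (X s) i j) (pair_potential d0 d1 m));
    [apply continuity_pt_dist2_X; auto|apply continuity_pt_pair_potential, dist2_in_range; auto].
Qed.

Lemma Pv_derivative t : 0 < t -> derivable_pt_lim Pv t (Pv' t).
Proof.
  intros Ht; unfold Pv, Pv', potential, potential_rate.
  replace (/ 2 * _) with (/ 4 * fsum k (fun i => fsum k (fun j => if Nat.eqb j i then 0 else
       fnet d0 d1 (S m) (dist2 n (X t) i j) *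
       fsum n (fun c => 2 * (X t i c - X t j c) * (V t i c - V t j c))))).
  - apply derivable_pt_lim_scal, derivable_pt_lim_pair_fsum; intros i j Hi Hj Hij.
    apply (derivable_pt_lim_comp (fun s => dist2 n (X s) i j) (pair_potential d0 d1 m)).
    + apply (derivable_pt_lim_dist2 X); intros c Hc; split; apply solution_derivative; auto.
    + apply derivable_pt_lim_pair_potential, dist2_in_range; auto.
  - rewrite <- !fsum_mul_l; apply fsum_ext; intros i _; rewrite <- !fsum_mul_l.
    apply fsum_ext; intros j _; destruct (Nat.eqb j i); [ring|].
    rewrite (fsum_ext n _ (fun c => 2 * ((X t i c - X t j c) * (V t i c - V t j c))))
      by (intros; ring).
    rewrite fsum_mul_l; field.
Qed.

Lemma Pv_nonpos t : Pv t <= 0.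
Proof. apply potential_nonpos; auto; intros; apply dist2_in_range; auto. Qed.

Lemma Gv_continuity t : continuity_pt Gv t.
Proof.
  apply continuity_pt_mult; [|apply continuity_pt_const; intros ? ?; auto].
  apply continuity_pt_scal, continuity_pt_pair_fsum; intros i j Hi Hj Hij.
  assert (Hd := continuity_pt_dist2_X i j t Hi Hj).
  destruct (dist2_in_range t i j Hi Hj Hij).
  apply (continuity_pt_mult (fun s => Rabs (fnet d0 d1 (S m) (dist2 n (X s) i j)))
           (fun s => sqrt (dist2 n (X s) i j))).
  - apply (continuity_pt_comp (fun s => fnet d0 d1 (S m) (dist2 n (X s) i j)) Rabs);
      [|apply Rcontinuity_abs].
    apply (continuity_pt_comp (fun s => dist2 n (X s) i j)); auto.
    apply continuity_pt_fnet; lra.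
  - apply (continuity_pt_comp (fun s => dist2 n (X s) i j) sqrt); auto.
    apply continuity_pt_sqrt, dist2_nonneg.
Qed.

Lemma Av_bounds t : kappa * Sv t <= Av t <= K / Rpower (sigma ^ 2) beta * INR k * Sv t.
Proof.
  unfold kappa, Sv, Av.
  apply alignment_dissipation_bounds; auto; intros i j Hi Hj; apply acoef_bounds; auto.
  destruct (Nat.eq_dec i j) as [->|Hij]; [rewrite dist2_diag; lra|].
  left; apply dist2_in_range; auto.
Qed.

Lemma Rabs_Pv'_le t : Rabs (Pv' t) <= Gv t * sqrt (Sv t).
Proof. apply Rabs_potential_rate_le; auto. Qed.

Lemma energy_supply_nonincreasing (Q Q' : R -> R) s t : 0 <= s <= t ->
  (forall u, s <= u <= t -> continuity_pt Q u) ->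
  (forall u, s < u < t -> derivable_pt_lim Q u (Q' u) /\ Q' u <= kappa * sqrt (Sv u)) ->
  sqrt (Sv t) - Pv t + Q t <= sqrt (Sv s) - Pv s + Q s.
Proof.
  intros Hst HQc HQd.
  destruct (continuity_ab_maj Gv s t) as [Mx [HMx _]]; [lra|intros; apply Gv_continuity|].
  apply (sqrt_energy_nonincreasing Sv Pv Q (fun u => 2 * (- Av u + Lambda k n (V u) * Pv' u))
           Pv' Q' s t kappa (Rmax 0 (Gv Mx))); try lra.
  - apply Rlt_le, kappa_pos.
  - apply Rmax_l.
  - intros u Hu; repeat split; auto using Sv_continuity, Pv_continuity, Sv_nonneg.
  - intros u Hu; destruct (HQd u Hu) as [HQ1 HQ2]; rewrite Lambda_sqrt; fold (Sv u).
    destruct (Av_bounds u); repeat split; auto.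
    + apply Sv_derivative; lra.
    + apply Pv_derivative; lra.
    + lra.
    + eapply Rle_trans; [apply Rabs_Pv'_le|]; apply Rmult_le_compat_r; [apply sqrt_pos|].
      eapply Rle_trans; [apply HMx; lra|apply Rmax_r].
Qed.

Lemma energy_nonincreasing s t : 0 <= s <= t -> sqrt (Sv t) - Pv t <= sqrt (Sv s) - Pv s.
Proof.
  intros Hst.
  assert (H := energy_supply_nonincreasing (fun _ => 0) (fun _ => 0) s t Hst).
  rewrite !Rplus_0_r in H; apply H.
  - intros; apply continuity_pt_const; intros ? ?; auto.
  - intros u _; split; [apply derivable_pt_lim_const|].
    apply Rmult_le_pos; [apply Rlt_le, kappa_pos|apply sqrt_pos].
Qed.

Let E0 := sqrt (Sv 0) - Pv 0.

Lemma energy_bounds t : 0 <= t -> sqrt (Sv t) <= E0 /\ - Pv t <= E0.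
Proof.
  intros Ht; assert (H := energy_nonincreasing 0 t ltac:(lra)); unfold E0.
  generalize (sqrt_pos (Sv t)) (Pv_nonpos t); lra.
Qed.

Lemma E0_nonneg : 0 <= E0.
Proof. destruct (energy_bounds 0 (Rle_refl 0)); generalize (sqrt_pos (Sv 0)); lra. Qed.

Lemma Sv_bounded t : 0 <= t -> Sv t <= E0 ^ 2.
Proof.
  intros Ht; destruct (energy_bounds t Ht); rewrite <- (sqrt_sqrt (Sv t)) by apply Sv_nonneg.
  simpl; rewrite Rmult_1_r; generalize (sqrt_pos (Sv t)); intros.
  apply Rmult_le_compat; lra.
Qed.

Let delta := / (INR m * (4 * E0) + 1).

Lemma delta_pos : 0 < delta.
Proof.
  assert (1 <= INR m) by (apply (le_INR 1); lia); generalize E0_nonneg; intros.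
  apply Rinv_0_lt_compat; nra.
Qed.

(** From [- Pv t <= E0] and the blow-up of the pair potential at [d0] and [d1]. *)
Lemma dist2_separated t i j : 0 <= t -> (i < k)%nat -> (j < k)%nat -> i <> j ->
  delta <= dist2 n (X t) i j - d0 /\ delta <= d1 - dist2 n (X t) i j.
Proof.
  intros Ht Hi Hj Hij; apply pair_potential_ge_separation; auto using dist2_in_range.
  assert (H := potential_le_pair_potential k n d0 d1 m (X t) i j hm).
  destruct (energy_bounds t Ht); unfold Pv in *.
  assert (4 * potential k n d0 d1 m (X t) <= pair_potential d0 d1 m (dist2 n (X t) i j))
    by (apply H; auto; intros; apply dist2_in_range; auto).
  lra.
Qed.

Let Gmax := / 2 * (INR k * (INR k * (2 / delta ^ S m * sqrt d1))) * sqrt (2 * INR k).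

Lemma Gv_bounded t : 0 <= t -> Gv t <= Gmax.
Proof.
  intros Ht; unfold Gv, Gmax, potential_rate_gain.
  apply Rmult_le_compat_r; [apply sqrt_pos|]; apply Rmult_le_compat_l; [lra|].
  rewrite <- fsum_const; apply fsum_le; intros i Hi.
  rewrite <- fsum_const; apply fsum_le; intros j Hj.
  assert (0 <= 2 / delta ^ S m)
    by (apply Rlt_le, Rdiv_lt_0_compat; [lra|apply pow_lt, delta_pos]).
  destruct (Nat.eqb j i) eqn:E; [apply Rmult_le_pos; auto; apply sqrt_pos|].
  apply Nat.eqb_neq in E; destruct (dist2_separated t i j Ht Hi Hj ltac:(auto)).
  apply Rmult_le_compat; [apply Rabs_pos|apply sqrt_pos| |].
  - apply Rabs_fnet_le; auto using delta_pos.
  - apply sqrt_le_1_alt; generalize delta_pos; lra.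
Qed.

Let Lip := (2 * (K / Rpower (sigma ^ 2) beta) * INR k + 2 * Gmax) * E0 ^ 2.

Lemma Sv_lipschitz u w : 0 <= u <= w -> Rabs (Sv w - Sv u) <= Lip * (w - u).
Proof.
  intros Huw.
  apply (Rabs_sub_le_of_deriv_bound Sv (fun z => 2 * (- Av z + Lambda k n (V z) * Pv' z)));
    [lra|intros; apply Sv_continuity|intros z Hz; split; [apply Sv_derivative; lra|]].
  assert (HG : 0 <= Gv z <= Gmax)
    by (split; [apply potential_rate_gain_nonneg|apply Gv_bounded; lra]).
  assert (HSz := Sv_bounded z ltac:(lra)); assert (HS0 := Sv_nonneg z).
  assert (HP := Rabs_Pv'_le z); destruct (Av_bounds z) as [HA1 HA2].
  assert (HAn : 0 <= Av z) by (generalize kappa_pos; nra).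
  rewrite Lambda_sqrt; fold (Sv z).
  assert (Hsq : sqrt (Sv z) * sqrt (Sv z) = Sv z) by (apply sqrt_sqrt; auto).
  set (L := sqrt (Sv z)) in *; assert (HL : 0 <= L) by apply sqrt_pos.
  assert (Hrate : Rabs (2 * (- Av z + L * Pv' z)) <= 2 * (Av z + L * Rabs (Pv' z))).
  { rewrite Rabs_mult, (Rabs_right 2) by lra; apply Rmult_le_compat_l; [lra|].
    eapply Rle_trans; [apply Rabs_triang|].
    rewrite Rabs_Ropp, Rabs_mult, (Rabs_right (Av z)), (Rabs_right L) by lra; lra. }
  assert (Hpot : L * Rabs (Pv' z) <= Gmax * Sv z) by (rewrite <- Hsq; nra).
  assert (0 < K / Rpower (sigma ^ 2) beta)
    by (apply Rdiv_lt_0_compat; auto; unfold Rpower; apply exp_pos).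
  assert (0 <= INR k) by apply pos_INR.
  assert (0 <= Gmax) by lra.
  assert (HSE : (2 * (K / Rpower (sigma ^ 2) beta) * INR k + 2 * Gmax) * Sv z
               <= (2 * (K / Rpower (sigma ^ 2) beta) * INR k + 2 * Gmax) * E0 ^ 2)
    by (apply Rmult_le_compat_l; auto; nra).
  unfold Lip; nra.
Qed.

Lemma sqrt_Sv_vanishes eta : 0 < eta ->
  exists T, 0 <= T /\ forall t, T <= t -> sqrt (Sv t) < eta.
Proof.
  apply (sqrt_vanishes_of_energy_decay Sv Pv kappa Lip kappa_pos).
  - intros; apply Sv_nonneg.
  - intros; apply Pv_nonpos.
  - intros; apply energy_nonincreasing; auto.
  - intros; apply Sv_lipschitz; auto.
  - intros u w eta' Huw Heta Hz.
    apply (energy_supply_nonincreasing (fun z => kappa * eta' * z) (fun z => kappa * eta' * 1));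
      auto.
    + intros; apply continuity_pt_scal, derivable_continuous_pt, derivable_pt_id.
    + intros z Hz'; split; [apply derivable_pt_lim_scal, derivable_pt_lim_id|].
      rewrite Rmult_1_r; apply Rmult_le_compat_l; [apply Rlt_le, kappa_pos|apply Hz; lra].
Qed.

Lemma avg_velocity_constant t c : 0 <= t -> (c < n)%nat -> avg k (v t) c = avg k (v 0) c.
Proof.
  intros Ht Hc; rewrite <- (extend0_nonneg v t), <- (extend0_nonneg v 0) by lra.
  set (g := fun s => avg k (V s) c); change (g t = g 0).
  assert (Hgc : forall u, continuity_pt g u).
  { intros u; apply continuity_pt_scal.
    apply (continuity_pt_fsum k (fun i s => V s i c)); intros; apply solution_continuity; auto. }
  assert (Hgd : forall u, 0 < u -> derivable_pt_lim g u 0).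
  { intros u Hu; unfold g, avg.
    rewrite <- (Rmult_0_r (/ INR k)), <- (fsum_accel k n K sigma beta d0 d1 (S m) (X u) (V u) c).
    apply derivable_pt_lim_scal.
    apply (derivable_pt_lim_fsum k (fun i s => V s i c)); intros i Hi.
    apply solution_derivative; auto. }
  apply Rle_antisym.
  - apply (deriv_nonpos_le g (fun _ => 0)); auto; intros u Hu; split; [apply Hgd|]; lra.
  - enough (- g t <= - g 0) by lra.
    apply (deriv_nonpos_le (fun s => - g s) (fun _ => - 0)); auto.
    + intros; apply continuity_pt_opp; auto.
    + intros u Hu; split; [apply derivable_pt_lim_opp, Hgd|]; lra.
Qed.

Lemma deviation_bounded t i : 0 <= t -> (i < k)%nat ->
  sqrt (norm2 n (fun c => x t i c - avg k (x t) c)) <= sqrt d1.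
Proof.
  intros Ht Hi; assert (Hk : 0 < INR k) by (apply lt_0_INR; lia).
  apply sqrt_le_1_alt; rewrite <- (extend0_nonneg x t Ht).
  eapply Rle_trans; [apply norm2_deviation_le; auto|].
  replace d1 with (/ INR k * (INR k * d1)) by (field; lra).
  apply Rmult_le_compat_l; [apply Rlt_le, Rinv_0_lt_compat; auto|].
  rewrite <- fsum_const; apply fsum_le; intros j Hj.
  destruct (Nat.eq_dec i j) as [->|Hij]; [rewrite dist2_diag; lra|].
  left; apply dist2_in_range; auto.
Qed.

Let Jv t := sqrt (fsum k (fun i => norm2 n (fun c => V t i c - avg k (V t) c))).

Lemma Jv_continuity t : continuity_pt Jv t.
Proof.
  apply (continuity_pt_comp (fun s => fsum k (fun i => norm2 n (fun c => V s i c - avg k (V s) c)))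
           sqrt).
  - apply (continuity_pt_fsum k (fun i s => norm2 n (fun c => V s i c - avg k (V s) c)));
      intros i Hi.
    apply (continuity_pt_fsum n (fun c s => (V s i c - avg k (V s) c) ^ 2)); intros c Hc.
    apply (continuity_pt_sqr (fun s => V s i c - avg k (V s) c)), continuity_pt_minus;
      [apply solution_continuity; auto|].
    apply continuity_pt_scal.
    apply (continuity_pt_fsum k (fun i s => V s i c)); intros; apply solution_continuity; auto.
  - apply continuity_pt_sqrt, fsum_nonneg; intros; apply fsum_nonneg; intros; apply pow2_ge_0.
Qed.

Lemma Jv_le t : Jv t <= sqrt 2 * sqrt (Sv t).
Proof.
  assert (H2 : 0 <= 2) by lra; rewrite <- sqrt_mult by auto using Sv_nonneg.
  apply sqrt_le_1_alt, fsum_norm2_deviation_le; auto.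
Qed.

(** [kappa / sqrt 2] times the integral of the dispersion is an energy supply. *)
Lemma dispersion_integral_bounded : exists M, forall T, 0 <= T ->
  exists pr : Riemann_integrable
      (fun t => sqrt (fsum k (fun i => norm2 n (fun c => v t i c - avg k (v t) c)))) 0 T,
    RiemannInt pr <= M.
Proof.
  exists (E0 * sqrt 2 / kappa); intros T HT.
  assert (Hs2 : 0 < sqrt 2) by (apply sqrt_lt_R0; lra).
  assert (Hk := kappa_pos).
  assert (C0 : forall t, 0 <= t <= T -> continuity_pt Jv t) by (intros; apply Jv_continuity).
  assert (prJ : Riemann_integrable Jv 0 T) by (apply continuity_implies_RiemannInt; auto).
  assert (Heq : forall t, 0 <= t ->
     Jv t = sqrt (fsum k (fun i => norm2 n (fun c => v t i c - avg k (v t) c))))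
    by (intros t Ht; unfold Jv; rewrite extend0_nonneg; auto).
  unshelve eexists.
  { refine (Riemann_integrable_ext _ _ prJ); intros t Ht.
    rewrite Rmin_left in Ht by lra; apply Heq; lra. }
  rewrite (RiemannInt_P18 _ prJ HT (fun t Ht => eq_sym (Heq t ltac:(lra)))).
  rewrite (RiemannInt_P20 HT (FTC_P1 HT C0) prJ).
  set (prim := primitive HT (FTC_P1 HT C0)).
  assert (Hpd : forall u, 0 <= u <= T -> derivable_pt_lim prim u (Jv u))
    by (intros; apply RiemannInt_P28; auto).
  assert (HE : sqrt (Sv T) - Pv T + kappa / sqrt 2 * prim T
               <= sqrt (Sv 0) - Pv 0 + kappa / sqrt 2 * prim 0).
  { apply (energy_supply_nonincreasing (fun u => kappa / sqrt 2 * prim u)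
           (fun u => kappa / sqrt 2 * Jv u)); [lra| |].
    - intros u Hu; apply continuity_pt_scal, derivable_continuous_pt.
      exists (Jv u); apply Hpd; auto.
    - intros u Hu; split; [apply derivable_pt_lim_scal, Hpd; lra|].
      apply Rle_trans with (kappa / sqrt 2 * (sqrt 2 * sqrt (Sv u))).
      + apply Rmult_le_compat_l; [apply Rlt_le, Rdiv_lt_0_compat; auto|apply Jv_le].
      + right; field; lra. }
  fold E0 in HE; generalize (sqrt_pos (Sv T)) (Pv_nonpos T); intros.
  apply Rmult_le_reg_l with (kappa / sqrt 2); [apply Rdiv_lt_0_compat; auto|].
  replace (kappa / sqrt 2 * (E0 * sqrt 2 / kappa)) with E0 by (field; lra).
  rewrite Rmult_minus_distr_l; lra.
Qed.

Lemma velocity_converges i eps : (i < k)%nat -> 0 < eps ->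
  exists T, forall t, T <= t -> sqrt (norm2 n (fun c => v t i c - avg k (v 0) c)) < eps.
Proof.
  intros Hi Heps; assert (Hs2 : 0 < sqrt 2) by (apply sqrt_lt_R0; lra).
  destruct (sqrt_Sv_vanishes (eps / sqrt 2)) as [T [HT0 HT]]; [apply Rdiv_lt_0_compat; auto|].
  exists T; intros t Ht.
  assert (HN : norm2 n (fun c => v t i c - avg k (v 0) c)
               = norm2 n (fun c => V t i c - avg k (V t) c)).
  { apply fsum_ext; intros c Hc.
    rewrite extend0_nonneg, (avg_velocity_constant t c); auto; lra. }
  rewrite HN; apply Rle_lt_trans with (Jv t).
  - apply sqrt_le_1_alt.
    apply (fsum_term_le k (fun i => norm2 n (fun c => V t i c - avg k (V t) c))); auto.
    intros; apply fsum_nonneg; intros; apply pow2_ge_0.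
  - eapply Rle_lt_trans; [apply Jv_le|].
    replace eps with (sqrt 2 * (eps / sqrt 2)) by (field; lra).
    apply Rmult_lt_compat_l; auto.
Qed.

End Solution.

Theorem mainTheorem2
  (k n : nat) (K sigma d0 d1 beta : R) (theta : nat)
  (hk : (2 <= k)%nat) (hK : 0 < K) (hsigma : 0 < sigma)
  (hd0 : 0 < d0) (hd01 : d0 < d1) (hbeta0 : 0 < beta) (hbeta1 : beta <= / 2)
  (htheta_pos : (0 < theta)%nat) (htheta_even : Nat.Even theta)
  (x v : R -> nat -> nat -> R)
  (hinit : forall i j, (i < k)%nat -> (j < k)%nat -> i <> j ->
      d0 < dist2 n (x 0) i j < d1)
  (hsol : is_solution k n K sigma beta d0 d1 theta x v) :
  (forall t, 0 <= t -> forall c, (c < n)%nat -> avg k (v t) c = avg k (v 0) c)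
  /\ (exists B, forall t, 0 <= t -> forall i, (i < k)%nat ->
        sqrt (norm2 n (fun c => x t i c - avg k (x t) c)) <= B)
  /\ (exists M, forall T, 0 <= T ->
        exists pr : Riemann_integrable
            (fun t => sqrt (fsum k (fun i => norm2 n (fun c => v t i c - avg k (v t) c))))
            0 T,
          RiemannInt pr <= M)
  /\ (forall i, (i < k)%nat -> forall eps, 0 < eps -> exists T, forall t, T <= t ->
        sqrt (norm2 n (fun c => v t i c - avg k (v 0) c)) < eps).
Proof.
  destruct theta as [|m]; [lia|].
  assert (hm : (1 <= m)%nat) by (destruct htheta_even as [q Hq]; lia).
  assert (hk1 : (1 <= k)%nat) by lia.
  split; [|split; [|split]].
  - intros t Ht c Hc; apply (avg_velocity_constant k n K sigma beta d0 d1 m x v); auto.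
  - exists (sqrt d1); intros t Ht i Hi.
    apply (deviation_bounded k n K sigma beta d0 d1 m x v); auto.
  - apply (dispersion_integral_bounded k n K sigma beta d0 d1 m x v); auto.
  - intros i Hi eps Heps; apply (velocity_converges k n K sigma beta d0 d1 m x v); auto.
Qed.
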